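(* Let $D\subseteq\mathbb{R}^n$ be nonempty, convex, closed and bounded, and let $f:\mathbb{R}^n\to\mathbb{R}$ be continuously differentiable. Consider Method (CGMIS) (described in the context). Then: (i) the number of changes of the index $k$ at each stage $p$ is finite, so the sequence $\{w^p\}_{p\ge0}$ is infinite; (ii) the sequence $\{w^p\}$ has limit points, and all of them belong to $D^0$; (iii) if, in addition, $f$ is pseudo-convex on $D$, then all limit points of $\{w^p\}$ belong to $D^*$, and $\lim_{p\to\infty}f(w^p)=f^*$.
   Context: Notation: $f'(x)$ is the gradient of $f$. The problem is $\min_{x\in D}f(x)$; $f^*=\inf_{x\in D}f(x)$ and $D^*$ is its solution set. $D^0$ is the set of $x^*\in D$ with $\langle f'(x^* ),x-x^*\rangle\ge0$ for all $x\in D$. $\mu(x)=\max_{y\in D}\langle f'(x),x-y\rangle$. A differentiable $\varphi$ is pseudo-convex on $D$ if for all $x,y\in D$, $\langle\varphi'(x),y-x\rangle\ge0$ implies $\varphi(y)\ge\varphi(x)$. Method (CGMIS): Choose $w^0\in D$, $\beta\in(0,1)$, and a positive sequence $\{\delta_p\}$ with $\delta_p\to0$. Set $p=1$. (Step 0) Choose a sequence of numbers $\tau_{l,p}\in(0,1)$, $l=0,1,\dots$, with $\tau_{l,p}\to0$ as $l\to\infty$; set $k=0$, $l=0$, $x^0=w^{p-1}$, and choose $\lambda_0\in(0,\tau_{0,p}]$. (Step 1) If $\mu(x^k)<\delta_p$, set $w^p=x^k$, replace $p$ by $p+1$ and go to Step 0 (restart). Otherwise choose any $z^k\in D$ with $\langle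 f'(x^k),x^k-z^k\rangle\ge\delta_p$. (Step 2) Set $d^k=z^k-x^k$, $x^{k+1}=x^k+\lambda_k d^k$. If $f(x^{k+1})\le f(x^k)+\beta\lambda_k\langle f'(x^k),d^k\rangle$, choose any $\lambda_{k+1}\in[\lambda_k,\tau_{l,p}]$ (with $l$ unchanged). Otherwise set $\lambda'_{k+1}=\min\{\lambda_k,\tau_{l+1,p}\}$, replace $l$ by $l+1$, and choose any $\lambda_{k+1}\in(0,\lambda'_{k+1}]$. Set $k=k+1$ and go to Step 1. The iterations with a fixed value of $p$ form stage $p$. *)

From mathcomp Require Import ssreflect ssrfun ssrbool eqtype ssrnat seq fintype bigop.
From Stdlib Require Import Reals ClassicalEpsilon.

Set Implicit Arguments.
Unset Strict Implicit.

Local Open Scope R_scope.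

Definition vec (n : nat) := 'I_n -> R.

Definition vadd n (u v : vec n) : vec n := fun i => u i + v i.
Definition vsub n (u v : vec n) : vec n := fun i => u i - v i.
Definition vscal n (a : R) (u : vec n) : vec n := fun i => a * u i.

Definition dot n (u v : vec n) : R := \big[Rplus/0]_(i < n) (u i * v i).
Definition vnorm n (u : vec n) : R := sqrt (dot u u).

Definition vnonempty n (D : vec n -> Prop) := exists x, D x.
Definition vconvex n (D : vec n -> Prop) :=
  forall x y t, D x -> D y -> 0 <= t <= 1 -> D (vadd x (vscal t (vsub y x))).
Definition vclosed n (D : vec n -> Prop) :=
  forall x, ~ D x -> exists eps, 0 < eps /\ forall y, vnorm (vsub y x) < eps -> ~ D y.
Definition vbounded n (D : vec n -> Prop) :=
  exists M, forall x, D x -> vnorm x <= M.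

Definition is_gradient n (f : vec n -> R) (f' : vec n -> vec n) :=
  forall x eps, 0 < eps -> exists d, 0 < d /\
    forall h, vnorm h < d ->
      Rabs (f (vadd x h) - f x - dot (f' x) h) <= eps * vnorm h.

Definition vcontinuous n m (g : vec n -> vec m) :=
  forall x eps, 0 < eps -> exists d, 0 < d /\
    forall y, vnorm (vsub y x) < d -> vnorm (vsub (g y) (g x)) < eps.

Definition C1_with_gradient n (f : vec n -> R) (f' : vec n -> vec n) :=
  is_gradient f f' /\ vcontinuous f'.

Definition is_max_gap n (D : vec n -> Prop) (f' : vec n -> vec n) (x : vec n) (m : R) :=
  (exists y, D y /\ dot (f' x) (vsub x y) = m) /\
  (forall y, D y -> dot (f' x) (vsub x y) <= m).
Definition mu n (D : vec n -> Prop) (f' : vec n -> vec n) (x : vec n) : R :=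
  epsilon (inhabits 0) (is_max_gap D f' x).

Definition is_inf_on n (D : vec n -> Prop) (f : vec n -> R) (m : R) :=
  (forall x, D x -> m <= f x) /\
  (forall m', (forall x, D x -> m' <= f x) -> m' <= m).
Definition fstar n (D : vec n -> Prop) (f : vec n -> R) : R :=
  epsilon (inhabits 0) (is_inf_on D f).

Definition in_Dstar n (D : vec n -> Prop) (f : vec n -> R) (x : vec n) :=
  D x /\ forall y, D y -> f x <= f y.

Definition in_D0 n (D : vec n -> Prop) (f' : vec n -> vec n) (x : vec n) :=
  D x /\ forall y, D y -> 0 <= dot (f' x) (vsub y x).

Definition pseudo_convex_on n (D : vec n -> Prop) (phi : vec n -> R) (phi' : vec n -> vec n) :=
  forall x y, D x -> D y -> 0 <= dot (phi' x) (vsub y x) -> phi x <= phi y.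

Definition limit_point n (w : nat -> vec n) (xs : vec n) :=
  forall eps, 0 < eps -> forall N, exists p, (N <= p)%nat /\ vnorm (vsub (w p) xs) < eps.

Definition armijo_ok n (f : vec n -> R) (f' : vec n -> vec n) (beta : R)
  (x d : vec n) (lam : R) :=
  f (vadd x (vscal lam d)) <= f x + beta * lam * dot (f' x) d.

(* One stage of (CGMIS) with tolerance delta, started at w.
   tau = the sequence tau_{l,p} (l = 0,1,...), x = x^k, z = z^k, lam = lambda_k,
   l k = the value of the index l when x^k is current.
   The conditions on step k are required only while the stage is still running,
   i.e. while the stopping test mu(x^j) < delta failed for all j <= k. *)
Definition cgmis_stage n (D : vec n -> Prop) (f : vec n -> R) (f' : vec n -> vec n)
  (beta delta : R) (w : vec n) (tau : nat -> R) (x z : nat -> vec n)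
  (lam : nat -> R) (l : nat -> nat) : Prop :=
  (forall j, 0 < tau j < 1) /\ Un_cv tau 0 /\
  x O = w /\ l O = O /\ 0 < lam O <= tau O /\
  forall k, (forall j, (j <= k)%nat -> delta <= mu D f' (x j)) ->
    D (z k) /\ delta <= dot (f' (x k)) (vsub (x k) (z k)) /\
    x (S k) = vadd (x k) (vscal (lam k) (vsub (z k) (x k))) /\
    (armijo_ok f f' beta (x k) (vsub (z k) (x k)) (lam k) ->
       l (S k) = l k /\ lam k <= lam (S k) <= tau (l k)) /\
    (~ armijo_ok f f' beta (x k) (vsub (z k) (x k)) (lam k) ->
       l (S k) = S (l k) /\ 0 < lam (S k) <= Rmin (lam k) (tau (S (l k)))).

(* A run of (CGMIS): w p = w^p; stage p (p >= 1) is described by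
   tau p, x p, z p, lam p, l p, starts at w^{p-1}, and when it stops
   (first k with mu(x^k) < delta_p) we have w^p = x^k. *)
Definition cgmis_run n (D : vec n -> Prop) (f : vec n -> R) (f' : vec n -> vec n)
  (beta : R) (delta : nat -> R) (w0 : vec n) (w : nat -> vec n)
  (tau : nat -> nat -> R) (x z : nat -> nat -> vec n)
  (lam : nat -> nat -> R) (l : nat -> nat -> nat) : Prop :=
  w O = w0 /\
  forall p, (1 <= p)%nat ->
    cgmis_stage D f f' beta (delta p) (w (p - 1)%nat) (tau p) (x p) (z p) (lam p) (l p) /\
    forall k, mu D f' (x p k) < delta p ->
      (forall j, (j < k)%nat -> delta p <= mu D f' (x p j)) ->
      w p = x p k.

(* Within a stage, suppose mu(x^k) >= delta_p for all k, so every direction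
   d^k = z^k - x^k has slope <f'(x^k), d^k> <= -delta_p.  If the Armijo test
   eventually always succeeds, the step sizes stop decreasing and f decreases
   by a fixed amount at every step, impossible for f bounded on the compact
   set D.  Otherwise the test fails infinitely often, so l -> oo and
   lambda_k <= tau_l -> 0; near a limit point of the failing iterates the mean
   value theorem and the continuity of f' make the test succeed for all small
   steps, a contradiction.  Hence every stage stops with mu(w^p) < delta_p.
   Since delta_p -> 0 and x |-> <f'(x), x - y> is continuous, every limit point
   is stationary; under pseudo-convexity stationary points are minimizers, and
   compactness then gives f(w^p) -> f^*. *)

From HB Require Import structures.
From mathcomp Require Import ssreflect ssrfun ssrbool eqtype ssrnat seq fintype bigop.
From mathcomp Require Import zify.
From Stdlib Require Import Reals Wf_nat ClassicalEpsilon Lra Lia Psatz Classical.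
From Stdlib Require Import FunctionalExtensionality.
Local Open Scope R_scope.
Set Implicit Arguments.
Unset Strict Implicit.

(** * Finite sums and vectors *)

Lemma RplusA : associative Rplus. Proof. by move=> a b c; rewrite Rplus_assoc. Qed.
HB.instance Definition _ := Monoid.isComLaw.Build R 0 Rplus RplusA Rplus_comm Rplus_0_l.

Section FiniteSums.
Variable n : nat.
Implicit Types F G : 'I_n -> R.

Lemma sumRN F : \big[Rplus/0]_(i < n) - F i = - \big[Rplus/0]_(i < n) F i.
Proof. by apply: (big_ind2 (fun a b => a = - b)) => [|a b c d -> ->|//]; lra. Qed.

Lemma sumRB F G :
  \big[Rplus/0]_(i < n) (F i - G i) = \big[Rplus/0]_(i < n) F i - \big[Rplus/0]_(i < n) G i.
Proof. by rewrite /Rminus big_split sumRN. Qed.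

Lemma sumRZ c F : \big[Rplus/0]_(i < n) (c * F i) = c * \big[Rplus/0]_(i < n) F i.
Proof. by apply: (big_ind2 (fun a b => a = c * b)) => [|a b d e -> ->|//]; lra. Qed.

Lemma ler_sumR F G : (forall i, F i <= G i) ->
  \big[Rplus/0]_(i < n) F i <= \big[Rplus/0]_(i < n) G i.
Proof. by move=> H; apply: (big_ind2 (fun a b => a <= b)) => [|a b d e ? ?|i _]; [lra|lra|]. Qed.

Lemma Rabs_sumR F : Rabs (\big[Rplus/0]_(i < n) F i) <= \big[Rplus/0]_(i < n) Rabs (F i).
Proof.
apply: (big_ind2 (fun a b => Rabs a <= b)) => [|a b d e ? ?|i _]; first by rewrite Rabs_R0; lra.
  by have := Rabs_triang a d; lra.
exact: Rle_refl.
Qed.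

Lemma sumR_const c : \big[Rplus/0]_(i < n) c = INR n * c.
Proof.
rewrite big_const_ord; elim: n => [|m IH]; first by rewrite /=; lra.
by rewrite iterS IH S_INR; lra.
Qed.

Lemma ler_sumR_term F i : (forall j, 0 <= F j) -> F i <= \big[Rplus/0]_(j < n) F j.
Proof.
move=> H; rewrite (bigD1 i) //=.
have : 0 <= \big[Rplus/0]_(j < n | j != i) F j.
  by apply: (big_ind (fun a => 0 <= a)) => [|a b ? ?|j _]; [lra|lra|exact: H].
by move=> Hs; rewrite -{1}(Rplus_0_r (F i)); apply: Rplus_le_compat_l.
Qed.

End FiniteSums.

Section Vectors.
Variable n : nat.
Implicit Types u v a b : vec n.

Lemma vec_ext u v : (forall i, u i = v i) -> u = v.
Proof. by move=> H; apply: functional_extensionality. Qed.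

Lemma vnorm_ge0 u : 0 <= vnorm u.
Proof. exact: sqrt_pos. Qed.

Lemma dot_subr a u v : dot a (vsub u v) = dot a u - dot a v.
Proof. by rewrite /dot -sumRB; apply: eq_bigr => i _; rewrite /vsub; ring. Qed.

Lemma dot_subl a b u : dot (vsub a b) u = dot a u - dot b u.
Proof. by rewrite /dot -sumRB; apply: eq_bigr => i _; rewrite /vsub; ring. Qed.

Lemma dot_scalr c a u : dot a (vscal c u) = c * dot a u.
Proof. by rewrite /dot -sumRZ; apply: eq_bigr => i _; rewrite /vscal; ring. Qed.

Lemma vnorm_subC u v : vnorm (vsub u v) = vnorm (vsub v u).
Proof. by rewrite /vnorm /dot; congr sqrt; apply: eq_bigr => i _; rewrite /vsub; ring. Qed.

Lemma vnorm_scal c u : vnorm (vscal c u) = Rabs c * vnorm u.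
Proof.
rewrite /vnorm; have -> : dot (vscal c u) (vscal c u) = (c * c) * dot u u.
  by rewrite /dot -sumRZ; apply: eq_bigr => i _; rewrite /vscal; ring.
by rewrite sqrt_mult_alt ?sqrt_Rsqr_abs //; nra.
Qed.

Lemma coord_le_vnorm u i : Rabs (u i) <= vnorm u.
Proof.
rewrite -sqrt_Rsqr_abs; apply: sqrt_le_1_alt.
by apply: (@ler_sumR_term n (fun j => u j * u j)) => j; nra.
Qed.

(* The constant [n + 1] replaces the sharp constants of the Euclidean
   inequalities: crude coordinatewise bounds suffice for every estimate below. *)
Definition norm_const := INR n + 1.

Lemma norm_const_gt1 : 1 <= norm_const.
Proof. by rewrite /norm_const; have := pos_INR n; lra. Qed.

Lemma vnorm_le_coord u c : 0 <= c -> (forall i, Rabs (u i) <= c) ->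
  vnorm u <= norm_const * c.
Proof.
move=> c0 H; have hK := norm_const_gt1.
rewrite -(sqrt_Rsqr (norm_const * c)); last by nra.
apply: sqrt_le_1_alt; apply: (Rle_trans _ (\big[Rplus/0]_(i < n) (c * c))).
  apply: ler_sumR => i.
  have -> : u i * u i = Rabs (u i) * Rabs (u i) by rewrite -Rabs_mult Rabs_pos_eq //; nra.
  by have := H i; have := Rabs_pos (u i); nra.
by rewrite sumR_const /Rsqr /norm_const; have := pos_INR n; nra.
Qed.

Lemma vnorm_addle u v : vnorm (vadd u v) <= norm_const * (vnorm u + vnorm v).
Proof.
apply: vnorm_le_coord => [|i]; first by have := vnorm_ge0 u; have := vnorm_ge0 v; lra.
apply: Rle_trans (Rabs_triang _ _) _.
by have := coord_le_vnorm u i; have := coord_le_vnorm v i; lra.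
Qed.

Lemma Rabs_dot_le u v : Rabs (dot u v) <= INR n * (vnorm u * vnorm v).
Proof.
apply: Rle_trans (Rabs_sumR _) _; rewrite -sumR_const; apply: ler_sumR => i.
by rewrite Rabs_mult; apply: Rmult_le_compat; try apply: Rabs_pos; apply: coord_le_vnorm.
Qed.

Lemma Rabs_dot_le_bound u v al be : vnorm u <= al -> vnorm v <= be ->
  Rabs (dot u v) <= INR n * (al * be).
Proof.
move=> hu hv; apply: Rle_trans (Rabs_dot_le u v) _.
have := pos_INR n; have := vnorm_ge0 u; have := vnorm_ge0 v.
by move=> h1 h2 h3; apply: Rmult_le_compat_l => //; apply: Rmult_le_compat.
Qed.

End Vectors.

Lemma vbounded_diam n (D : vec n -> Prop) : vbounded D ->
  exists B, forall x y, D x -> D y -> vnorm (vsub x y) <= B.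
Proof.
move=> [M HM]; exists (norm_const n * (M + M)) => x y hx hy.
have hM : 0 <= M by apply: Rle_trans (HM _ hx); apply: vnorm_ge0.
apply: vnorm_le_coord => [|i]; first lra.
rewrite /vsub; apply: Rle_trans (Rabs_triang _ _) _; rewrite Rabs_Ropp.
have := coord_le_vnorm x i; have := coord_le_vnorm y i; have := HM _ hx; have := HM _ hy; lra.
Qed.

(** * Continuity and differentiability *)

Definition rcontinuous n (g : vec n -> R) :=
  forall x eps, 0 < eps -> exists d, 0 < d /\
    forall y, vnorm (vsub y x) < d -> Rabs (g y - g x) < eps.

Section Continuity.
Variable n : nat.

Lemma vcontinuous_cst m (a : vec m) : vcontinuous (fun _ : vec n => a).
Proof.
move=> x eps he; exists 1; split => [|y _]; first lra.
have -> : vsub a a = vscal 0 a by apply: vec_ext => i; rewrite /vsub /vscal; ring.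
by rewrite vnorm_scal Rabs_R0 Rmult_0_l.
Qed.

Lemma vcontinuous_subl (a : vec n) : vcontinuous (fun v => vsub v a).
Proof.
move=> x eps he; exists eps; split => // y.
suff -> : vsub (vsub y a) (vsub x a) = vsub y x by [].
by apply: vec_ext => i; rewrite /vsub; ring.
Qed.

Lemma vcontinuous_subr (a : vec n) : vcontinuous (fun v => vsub a v).
Proof.
move=> x eps he; exists eps; split => // y.
suff -> : vsub (vsub a y) (vsub a x) = vsub x y by rewrite vnorm_subC.
by apply: vec_ext => i; rewrite /vsub; ring.
Qed.

Lemma rcontinuous_dot m (g h : vec n -> vec m) :
  vcontinuous g -> vcontinuous h -> rcontinuous (fun v => dot (g v) (h v)).
Proof.
move=> Hg Hh x eps heps.
set C := INR m * (1 + vnorm (g x) + vnorm (h x)) + 1.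
have hm := pos_INR m; have hg0 := vnorm_ge0 (g x); have hh0 := vnorm_ge0 (h x).
have hC : 0 < C by rewrite /C; nra.
set e := Rmin 1 (eps / C).
have he : 0 < e by apply: Rmin_glb_lt; [lra | apply: Rdiv_lt_0_compat].
have he1 : e <= 1 := Rmin_l _ _.
have hCe : C * e <= eps.
  by have := Rmin_r 1 (eps / C); rewrite -/e => ?; rewrite -(Rmult_div_r C eps); [nra|lra].
have [dg [hdg Hdg]] := Hg x _ he; have [dh [hdh Hdh]] := Hh x _ he.
exists (Rmin dg dh); split => [|y hy]; first exact: Rmin_glb_lt.
set a := vsub (g y) (g x); set b := vsub (h y) (h x).
have ha : vnorm a < e := Hdg y (Rlt_le_trans _ _ _ hy (Rmin_l _ _)).
have hb : vnorm b < e := Hdh y (Rlt_le_trans _ _ _ hy (Rmin_r _ _)).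
have ha0 := vnorm_ge0 a; have hb0 := vnorm_ge0 b.
have -> : dot (g y) (h y) - dot (g x) (h x) = dot a b + dot a (h x) + dot (g x) b.
  by rewrite /a /b !dot_subl !dot_subr; ring.
have b1 := Rabs_dot_le a b; have b2 := Rabs_dot_le a (h x); have b3 := Rabs_dot_le (g x) b.
have t1 := Rabs_triang (dot a b + dot a (h x)) (dot (g x) b).
have t2 := Rabs_triang (dot a b) (dot a (h x)).
have : vnorm a * vnorm b + vnorm a * vnorm (h x) + vnorm (g x) * vnorm b <=
       e * (1 + vnorm (g x) + vnorm (h x)) by nra.
move=> /(Rmult_le_compat_l _ _ _ hm) hsum.
rewrite /C in hCe; nra.
Qed.

Variable f : vec n -> R.
Variable f' : vec n -> vec n.
Hypothesis Hgrad : is_gradient f f'.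

Lemma gradient_rcontinuous : rcontinuous f.
Proof.
move=> x eps he.
have [d1 [hd1 H1]] := @Hgrad x 1 Rlt_0_1.
set C := 1 + INR n * vnorm (f' x).
have hC : 0 < C by rewrite /C; have := pos_INR n; have := vnorm_ge0 (f' x); nra.
exists (Rmin d1 (eps / C)); split => [|y hy].
  by apply: Rmin_glb_lt => //; apply: Rdiv_lt_0_compat.
have hy1 := Rlt_le_trans _ _ _ hy (Rmin_l _ _).
have hy2 := Rlt_le_trans _ _ _ hy (Rmin_r _ _).
have := H1 _ hy1.
have -> : vadd x (vsub y x) = y by apply: vec_ext => i; rewrite /vadd /vsub; ring.
have hb := Rabs_dot_le (f' x) (vsub y x).
have h0 := vnorm_ge0 (vsub y x).
have hC2 : C * vnorm (vsub y x) < eps.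
  have := Rmult_lt_compat_l C _ _ hC hy2.
  by have -> : C * (eps / C) = eps by field; lra.
have := Rabs_triang (f y - f x - dot (f' x) (vsub y x)) (dot (f' x) (vsub y x)).
have -> : f y - f x - dot (f' x) (vsub y x) + dot (f' x) (vsub y x) = f y - f x by ring.
rewrite /C in hC2; nra.
Qed.

Lemma derivable_pt_lim_line x d t :
  derivable_pt_lim (fun t => f (vadd x (vscal t d))) t (dot (f' (vadd x (vscal t d))) d).
Proof.
move=> eps he; set y := vadd x (vscal t d).
set B := vnorm d + 1.
have hB : 0 < B by rewrite /B; have := vnorm_ge0 d; lra.
have [d1 [hd1 H1]] := @Hgrad y (eps / (2 * B)) ltac:(apply: Rdiv_lt_0_compat; lra).
have hd2 : 0 < d1 / B by apply: Rdiv_lt_0_compat.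
exists (mkposreal _ hd2) => h hh0 /= hh.
have -> : vadd x (vscal (t + h) d) = vadd y (vscal h d).
  by apply: vec_ext => i; rewrite /y /vadd /vscal; ring.
have hah : 0 < Rabs h by apply: Rabs_pos_lt.
have hnh : vnorm (vscal h d) <= Rabs h * B.
  by rewrite vnorm_scal /B; nra.
have hlt : vnorm (vscal h d) < d1.
  have : Rabs h * B < d1 / B * B by apply: Rmult_lt_compat_r.
  have -> : d1 / B * B = d1 by field; lra.
  lra.
have := H1 _ hlt; rewrite dot_scalr => H2.
have hE : eps / (2 * B) * vnorm (vscal h d) <= eps / 2 * Rabs h.
  have -> : eps / 2 * Rabs h = eps / (2 * B) * (Rabs h * B) by field; lra.
  by apply: Rmult_le_compat_l => //; apply: Rlt_le; apply: Rdiv_lt_0_compat; lra.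
have -> : (f (vadd y (vscal h d)) - f y) / h - dot (f' y) d =
          (f (vadd y (vscal h d)) - f y - h * dot (f' y) d) / h by field.
rewrite /Rdiv Rabs_mult Rabs_inv.
apply: (Rmult_lt_reg_r (Rabs h)) => //.
rewrite Rmult_assoc Rinv_l; last lra.
nra.
Qed.

Lemma mean_value_line x d lam : 0 < lam -> exists th, 0 < th < lam /\
  f (vadd x (vscal lam d)) - f x = lam * dot (f' (vadd x (vscal th d))) d.
Proof.
move=> hl.
have [c [Hc1 Hc2]] := MVT_cor2 _ _ 0 lam hl (fun c _ => derivable_pt_lim_line x d c).
exists c; split => //.
have E : vadd x (vscal 0 d) = x by apply: vec_ext => i; rewrite /vadd /vscal; ring.
by rewrite E in Hc1; rewrite Hc1; ring.
Qed.

End Continuity.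

(** * Compactness *)

Lemma nat_nondecreasing_le (g : nat -> nat) : (forall k, (g k <= g k.+1)%nat) ->
  forall a b, (a <= b)%nat -> (g a <= g b)%nat.
Proof.
move=> H a; elim=> [|b IH]; first by rewrite leqn0 => /eqP ->.
rewrite leq_eqVlt => /orP [/eqP -> //|hab].
by have := IH hab; have := H b; lia.
Qed.

Definition strictly_increasing (phi : nat -> nat) := forall k, (phi k < phi k.+1)%nat.

Lemma strictly_increasing_ge phi : strictly_increasing phi -> forall k, (k <= phi k)%nat.
Proof. by move=> H; elim=> [|k IH] //; have := H k; lia. Qed.

Lemma strictly_increasing_comp phi psi :
  strictly_increasing phi -> strictly_increasing psi -> strictly_increasing (phi \o psi).
Proof.
move=> H1 H2 k /=.
have := nat_nondecreasing_le (fun k => ltnW (H1 k)) (H2 k).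
by have := H1 (psi k); lia.
Qed.

Lemma choice_seq (A : Type) (P : nat -> A -> Prop) :
  (forall k, exists a, P k a) -> exists u : nat -> A, forall k, P k (u k).
Proof.
move=> H; exists (fun k => proj1_sig (constructive_indefinite_description _ (H k))).
by move=> k; exact: proj2_sig (constructive_indefinite_description _ (H k)).
Qed.

Lemma inv_succ_small eps : 0 < eps -> exists N, forall k, (N <= k)%nat -> / (INR k + 1) < eps.
Proof.
move=> he; have [N [HN HN0]] := archimed_cor1 eps he.
exists N => k hk.
have hN : 0 < INR N by apply: lt_0_INR; lia.
have hk' : INR N <= INR k + 1 by have := le_INR N k (elimT leP hk); lra.
by apply: Rle_lt_trans HN; apply: Rinv_le_contravar.
Qed.

Lemma bounded_cv_subseq (v : nat -> R) M : (forall k, Rabs (v k) <= M) ->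
  exists phi l, strictly_increasing phi /\ forall eps, 0 < eps ->
    exists N, forall k, (N <= k)%nat -> Rabs (v (phi k) - l) < eps.
Proof.
move=> HM.
have [l Hl] : exists l, ValAdh v l.
  apply: (Bolzano_Weierstrass _ _ (compact_P3 (-M) M)) => k.
  by have := HM k; have := Rle_abs (v k); have := Rle_abs (- v k); rewrite Rabs_Ropp; lra.
have Hsel : forall N : nat, exists g : nat -> nat, forall k,
    (N <= g k)%nat /\ Rabs (v (g k) - l) < / (INR k + 1).
  move=> N; apply: (choice_seq (P := fun k p => (N <= p)%nat /\ Rabs (v p - l) < / (INR k + 1))).
  move=> k; have hp : 0 < / (INR k + 1) by apply: Rinv_0_lt_compat; have := pos_INR k; lra.
  have [p [hp1 hp2]] :=
    Hl (disc l (mkposreal _ hp)) N (ex_intro _ (mkposreal _ hp) (fun y h => h)).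
  by exists p; split; [apply/leP | exact: hp2].
have [sel Hs] := choice_seq Hsel.
(* [phi (k+1)] is chosen beyond [phi k] and within [1/(k+2)] of [l]. *)
pose phi := fix phi k := if k is k'.+1 then sel (phi k').+1 k else sel 0%nat 0%nat.
exists phi, l; split; first by move=> k /=; have := (Hs (phi k).+1 k.+1).1.
move=> eps he; have [N HN] := inv_succ_small he.
exists N => k hk; apply: Rlt_trans (HN k hk).
by case: k hk => [|k] hk /=; [exact: (Hs 0%nat 0%nat).2 | exact: (Hs _ _).2].
Qed.

Lemma bounded_cv_subseq_coords n (u : nat -> vec n) M : (forall k i, Rabs (u k i) <= M) ->
  forall m, (m <= n)%nat -> exists phi (l : vec n), strictly_increasing phi /\
    forall eps, 0 < eps -> exists N, forall k, (N <= k)%nat ->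
      forall i : 'I_n, (i < m)%nat -> Rabs (u (phi k) i - l i) < eps.
Proof.
move=> HM; elim=> [|m IH] hm.
  by exists (fun k : nat => k), (fun _ => 0); split => // eps he; exists 0%nat.
have [phi [l [Hphi Hl]]] := IH (ltnW hm).
set j : 'I_n := Ordinal hm.
have [psi [l0 [Hpsi Hl0]]] := bounded_cv_subseq (fun k => HM (phi k) j).
exists (phi \o psi), (fun i => if nat_of_ord i == m then l0 else l i).
split => [|eps he]; first exact: strictly_increasing_comp.
have [N1 HN1] := Hl eps he; have [N2 HN2] := Hl0 eps he.
exists (maxn N1 N2) => k hk i hi /=.
case: eqP => [him|him].
  have -> : i = j by apply: val_inj; rewrite /= him.
  by apply: HN2; lia.
apply: HN1; last by lia.
by have := strictly_increasing_ge Hpsi k; lia.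
Qed.

Section LimitPoints.
Variable n : nat.
Implicit Types (D : vec n -> Prop) (u : nat -> vec n) (g : vec n -> R).

Lemma vbounded_limit_point D u : vbounded D -> (forall p, D (u p)) ->
  exists xs, limit_point u xs.
Proof.
move=> [M HM] Hu.
have HM' : forall k i, Rabs (u k i) <= M.
  by move=> k i; apply: Rle_trans (HM _ (Hu k)); apply: coord_le_vnorm.
have [phi [l [Hphi Hl]]] := bounded_cv_subseq_coords HM' (leqnn n).
exists l => eps he N; have hK := norm_const_gt1 n.
have he2 : 0 < eps / (2 * norm_const n) by apply: Rdiv_lt_0_compat; lra.
have [N1 HN1] := Hl _ he2.
exists (phi (maxn N N1)); split; first by have := strictly_increasing_ge Hphi (maxn N N1); lia.
apply: Rle_lt_trans (vnorm_le_coord (c := eps / (2 * norm_const n)) _ _) _.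
- lra.
- by move=> i; apply: Rlt_le; rewrite /vsub; apply: HN1 => //; lia.
- have -> : norm_const n * (eps / (2 * norm_const n)) = eps / 2 by field; lra.
  lra.
Qed.

Lemma limit_point_vclosed D u xs : vclosed D -> (forall p, D (u p)) ->
  limit_point u xs -> D xs.
Proof.
move=> Hcl Hu Hxs; apply: NNPP => hn.
have [e [he H]] := Hcl _ hn; have [p [_ hp]] := Hxs e he 0%nat.
exact: H _ hp (Hu p).
Qed.

Lemma limit_point_subseq u (ps : nat -> nat) xs : (forall i, (i <= ps i)%nat) ->
  limit_point (fun i => u (ps i)) xs -> limit_point u xs.
Proof.
move=> Hps Hxs e he N; have [i [hi1 hi2]] := Hxs e he N.
by exists (ps i); split => //; have := Hps i; lia.
Qed.

Lemma limit_point_le g u (e : nat -> R) xs : rcontinuous g -> Un_cv e 0 ->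
  (forall p, (1 <= p)%nat -> g (u p) < e p) -> limit_point u xs -> g xs <= 0.
Proof.
move=> Hg He Hu Hxs; apply: Rnot_lt_le => hpos.
have hc : 0 < g xs / 2 by lra.
have [N HN] := He _ hc; have [d [hd Hd]] := Hg xs _ hc.
have [p [hp1 hp2]] := Hxs d hd (maxn N 1).
have := HN p (elimT leP (leq_trans (leq_maxl _ _) hp1)); rewrite /R_dist Rminus_0_r.
have := Hd _ hp2; have := Hu p (leq_trans (leq_maxr _ _) hp1).
have := Rle_abs (e p); have := Rle_abs (- (g (u p) - g xs)); rewrite Rabs_Ropp; lra.
Qed.

Lemma rcontinuous_bounded_above D g : vbounded D -> rcontinuous g ->
  exists B, forall y, D y -> g y <= B.
Proof.
move=> Hbd Hg; apply: NNPP => hnb.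
have H : forall k : nat, exists y, D y /\ INR k < g y.
  move=> k; apply: NNPP => hk; apply: hnb; exists (INR k) => y hy.
  by apply: Rnot_lt_le => hlt; apply: hk; exists y.
have [u Hu] := choice_seq H.
have [ys Hys] := vbounded_limit_point Hbd (fun p => (Hu p).1).
have [d [hd Hd]] := Hg ys 1 Rlt_0_1.
have [N HN] := INR_unbounded (g ys + 1).
have [p [hp1 hp2]] := Hys d hd N.
have := Hd _ hp2; have := (Hu p).2; have := le_INR _ _ (elimT leP hp1).
by have := Rle_abs (g (u p) - g ys); lra.
Qed.

Lemma rcontinuous_attains_max D g : vnonempty D -> vclosed D -> vbounded D ->
  rcontinuous g -> exists ym, D ym /\ forall y, D y -> g y <= g ym.
Proof.
move=> [y0 hy0] Hcl Hbd Hg.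
have [B HB] := rcontinuous_bounded_above Hbd Hg.
set E := fun r => exists y, D y /\ r = g y.
have hE : bound E by exists B => r [y [hy ->]]; exact: HB.
have [s [Hs1 Hs2]] := completeness E hE (ex_intro _ (g y0) (ex_intro _ y0 (conj hy0 erefl))).
have H : forall k : nat, exists y, D y /\ s - / (INR k + 1) < g y.
  move=> k; apply: NNPP => hk.
  have hp : 0 < / (INR k + 1) by apply: Rinv_0_lt_compat; have := pos_INR k; lra.
  suff : s <= s - / (INR k + 1) by lra.
  apply: Hs2 => r [y [hy ->]]; apply: Rnot_lt_le => hlt; apply: hk; by exists y.
have [u Hu] := choice_seq H.
have [ys Hys] := vbounded_limit_point Hbd (fun p => (Hu p).1).
exists ys; split; first exact: limit_point_vclosed Hcl (fun p => (Hu p).1) Hys.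
suff hs : s <= g ys by move=> y hy; apply: Rle_trans hs; apply: Hs1; exists y.
apply: Rnot_lt_le => hlt.
have hgap : 0 < (s - g ys) / 2 by lra.
have [d [hd Hd]] := Hg ys _ hgap; have [N HN] := inv_succ_small hgap.
have [p [hp1 hp2]] := Hys d hd N.
have := Hd _ hp2; have := (Hu p).2; have := HN p hp1.
by have := Rle_abs (g (u p) - g ys); lra.
Qed.

End LimitPoints.

Lemma mu_spec n (D : vec n -> Prop) f' x :
  vnonempty D -> vclosed D -> vbounded D -> is_max_gap D f' x (mu D f' x).
Proof.
move=> Hne Hcl Hbd.
have Hc : rcontinuous (fun y => dot (f' x) (vsub x y)).
  exact: rcontinuous_dot (vcontinuous_cst _) (vcontinuous_subr x).
have [ym [hym Hym]] := rcontinuous_attains_max Hne Hcl Hbd Hc.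
apply: epsilon_spec; exists (dot (f' x) (vsub x ym)); split => //; by exists ym.
Qed.

Lemma fstar_minimizer n (D : vec n -> Prop) f xs : in_Dstar D f xs -> fstar D f = f xs.
Proof.
move=> [hxs Hxs].
have Hinf : is_inf_on D f (f xs) by split => // m' Hm'; exact: Hm' _ hxs.
have [H1 H2] : is_inf_on D f (fstar D f) by apply: epsilon_spec; exists (f xs).
apply: Rle_antisym; [exact: H1 | exact: H2 (proj1 Hinf)].
Qed.

(** * Finiteness of a stage *)

Lemma armijo_ok_near n (f : vec n -> R) f' beta c B xb :
  C1_with_gradient f f' -> beta < 1 -> 0 < c -> 0 <= B ->
  exists r, 0 < r /\ forall x d lam, vnorm (vsub x xb) < r -> vnorm d <= B ->
    0 < lam < r -> dot (f' x) d <= - c -> armijo_ok f f' beta x d lam.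
Proof.
move=> [Hg Hfc] hbeta hc hB.
have hn := pos_INR n; have hK := norm_const_gt1 n.
set c0 := (1 - beta) * c.
have hc0 : 0 < c0 by rewrite /c0; nra.
set eta := c0 / (2 * (INR n + 1) * (B + 1)).
have heta : 0 < eta by apply: Rdiv_lt_0_compat => //; nra.
have heta2 : 2 * INR n * (eta * B) < c0.
  have : eta * (2 * (INR n + 1) * (B + 1)) = c0 by rewrite /eta; field; nra.
  nra.
have [rho [hrho Hrho]] := Hfc xb eta heta.
set r := rho / (2 * norm_const n * (B + 1)).
have hr : 0 < r by apply: Rdiv_lt_0_compat => //; nra.
have hrB : norm_const n * (r + r * B) = rho / 2 by rewrite /r; field; nra.
exists r; split => // x d lam hx hd [hlam hlamr] hdesc.
have [th [hth Hmvt]] := mean_value_line Hg x d hlam.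
set xi := vadd x (vscal th d) in Hmvt.
have hd0 := vnorm_ge0 d; have hx0 := vnorm_ge0 (vsub x xb).
have hxi : vnorm (vsub xi xb) < rho.
  have -> : vsub xi xb = vadd (vsub x xb) (vscal th d).
    by apply: vec_ext => i; rewrite /xi /vsub /vadd /vscal; ring.
  apply: Rle_lt_trans (vnorm_addle _ _) _; rewrite vnorm_scal Rabs_pos_eq; last lra.
  have : vnorm (vsub x xb) + th * vnorm d <= r + r * B by nra.
  by move=> /(Rmult_le_compat_l _ _ _ (Rle_trans _ _ _ Rle_0_1 hK)); lra.
have hxr : vnorm (vsub x xb) < rho.
  have : 0 <= norm_const n * (r * B) by apply: Rmult_le_pos; nra.
  nra.
have b1 := Rabs_dot_le_bound (Rlt_le _ _ (Hrho _ hxi)) hd.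
have b2 := Rabs_dot_le_bound (Rlt_le _ _ (Hrho _ hxr)) hd.
rewrite dot_subl in b1; rewrite dot_subl in b2.
have := Rle_abs (dot (f' xi) d - dot (f' xb) d).
have := Rle_abs (- (dot (f' x) d - dot (f' xb) d)); rewrite Rabs_Ropp => b3 b4.
have hslope : dot (f' xi) d <= beta * dot (f' x) d.
  have : c0 <= (1 - beta) * - dot (f' x) d by apply: Rmult_le_compat_l; lra.
  lra.
rewrite /armijo_ok; nra.
Qed.

Lemma rcontinuous_opp n (g : vec n -> R) : rcontinuous g -> rcontinuous (fun y => - g y).
Proof.
move=> Hg x eps he; have [d [hd Hd]] := Hg x eps he.
by exists d; split => // y /Hd; rewrite -Rabs_Ropp; congr (Rabs _ < _); ring.
Qed.

Lemma no_uniform_decrease (u : nat -> R) c m : 0 < c ->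
  (forall k, u k.+1 <= u k - c) -> (forall k, m <= u k) -> False.
Proof.
move=> hc Hdec Hm.
have Hlin : forall k, u k <= u 0%nat - INR k * c.
  by elim=> [|k IH]; [rewrite /=; lra | rewrite S_INR; have := Hdec k; lra].
have [k Hk] := INR_unbounded ((u 0%nat - m) / c).
have : u 0%nat - m < INR k * c.
  by have := Rmult_lt_compat_r c _ _ hc Hk; rewrite /Rdiv Rmult_assoc Rinv_l; lra.
by have := Hlin k; have := Hm k; lra.
Qed.

Section Stage.
Variables (n : nat) (D : vec n -> Prop) (f : vec n -> R) (f' : vec n -> vec n).
Variables (beta delta : R) (w : vec n) (tau : nat -> R) (x z : nat -> vec n).
Variables (lam : nat -> R) (l : nat -> nat).
Hypothesis Hstage : cgmis_stage D f f' beta delta w tau x z lam l.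
Hypotheses (HDcvx : vconvex D) (Hw : D w).

Lemma stage_iterates_inD k : (forall j, (j < k)%nat -> delta <= mu D f' (x j)) ->
  D (x k) /\ 0 < lam k <= tau (l k).
Proof.
case: Hstage => [Htau [_ [Hx0 [Hl0 [Hlam0 Hstep]]]]].
elim: k => [|k IH] H; first by rewrite Hx0 Hl0.
have [hD hlam] := IH (fun j hj => H j (ltnW hj)).
have [Dz [_ [-> [Ha Hna]]]] := Hstep k (fun j hj => H j hj).
have ht := Htau (l k).
split; first by apply: HDcvx => //; lra.
case: (classic (armijo_ok f f' beta (x k) (vsub (z k) (x k)) (lam k))) => ha.
  by have [-> ?] := Ha ha; lra.
have [-> [hh1 hh2]] := Hna ha; split => //.
exact: Rle_trans hh2 (Rmin_r _ _).
Qed.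

Section NonStopping.
Hypothesis Hnostop : forall k, delta <= mu D f' (x k).
Hypotheses (HDbd : vbounded D) (Hf : C1_with_gradient f f').
Hypotheses (Hbeta : 0 < beta < 1) (Hdelta : 0 < delta).

Let armijo k := armijo_ok f f' beta (x k) (vsub (z k) (x k)) (lam k).
Let step k := Hstage.2.2.2.2.2 k (fun j _ => Hnostop j).
Let iterate k := stage_iterates_inD (fun j _ => Hnostop j) (k := k).

Lemma stage_descent k : dot (f' (x k)) (vsub (z k) (x k)) <= - delta.
Proof.
have [_ [hd _]] := step k.
by have : dot (f' (x k)) (vsub (z k) (x k)) = - dot (f' (x k)) (vsub (x k) (z k));
  [rewrite !dot_subr; ring | lra].
Qed.

(* Once the Armijo test always succeeds, the step sizes no longer decrease and
   every step lowers [f] by at least [beta * lam K * delta]. *)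
Lemma stage_armijo_not_eventually : ~ exists K, forall k, (K <= k)%nat -> armijo k.
Proof.
move=> [K HK].
have lam_ge : forall m, lam K <= lam (K + m)%nat.
  elim=> [|m IH]; first by rewrite addn0; lra.
  have [_ [_ [_ [Ha _]]]] := step (K + m)%nat.
  by have [_ [hh _]] := Ha (HK _ (leq_addr _ _)); rewrite addnS; lra.
have hlK := (iterate K).2.1.
have hc : 0 < beta * lam K * delta by apply: Rmult_lt_0_compat => //; nra.
have [B HB] := rcontinuous_bounded_above HDbd (rcontinuous_opp (gradient_rcontinuous Hf.1)).
apply: (@no_uniform_decrease (fun m => f (x (K + m)%nat)) _ (- B) hc) => [m|m].
  have [_ [_ [hx _]]] := step (K + m)%nat.
  have := HK _ (leq_addr m K); rewrite /armijo /armijo_ok -hx addnS.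
  have := lam_ge m; have := stage_descent (K + m)%nat.
  set s := dot _ _ => h1 h2.
  have : beta * lam K * delta <= beta * lam (K + m)%nat * delta by nra.
  nra.
by have := HB _ (iterate (K + m)%nat).1; lra.
Qed.

(* Each failure of the test increments [l], and [lam k <= tau (l k)] with [tau -> 0]. *)
Lemma stage_lam_cv0 : (forall K, exists k, (K <= k)%nat /\ ~ armijo k) ->
  forall e, 0 < e -> exists K, forall k, (K <= k)%nat -> lam k < e.
Proof.
move=> Hfail e he.
have l_mono : forall k, (l k <= l k.+1)%nat.
  move=> k; have [_ [_ [_ [Ha Hna]]]] := step k.
  by case: (classic (armijo k)) => ha; [rewrite (Ha ha).1 | rewrite (Hna ha).1].
have l_big : forall L, exists K, forall k, (K <= k)%nat -> (L <= l k)%nat.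
  elim=> [|L [K HK]]; first by exists 0%nat.
  have [k [hk hna]] := Hfail K; have [_ [_ [_ [_ Hna]]]] := step k.
  exists k.+1 => k' hk'.
  by have := nat_nondecreasing_le l_mono hk'; rewrite (Hna hna).1; have := HK k hk; lia.
have [L HL] := Hstage.2.1 e he; have [K HK] := l_big L.
exists K => k hk.
have := HL _ (elimT leP (HK k hk)); rewrite /R_dist Rminus_0_r.
by have := (iterate k).2.2; have := Rle_abs (tau (l k)); lra.
Qed.

(* Near a limit point of the failing iterates, [armijo_ok_near] makes the
   test succeed once the step size is small: a contradiction. *)
Lemma stage_armijo_not_often : ~ forall K, exists k, (K <= k)%nat /\ ~ armijo k.
Proof.
move=> Hfail.
have [kf Hkf] := choice_seq Hfail.
have [xb Hxb] := vbounded_limit_point HDbd (fun i => (iterate (kf i)).1).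
have [B HB] := vbounded_diam HDbd.
have Hdn : forall k, vnorm (vsub (z k) (x k)) <= B.
  by move=> k; apply: HB; [exact: (step k).1 | exact: (iterate k).1].
have hB : 0 <= B := Rle_trans _ _ _ (vnorm_ge0 _) (Hdn 0%nat).
have [r [hr Hr]] := armijo_ok_near xb Hf Hbeta.2 Hdelta hB.
have [K HK] := stage_lam_cv0 Hfail hr.
have [i [hi hxi]] := Hxb r hr K.
have hk : (K <= kf i)%nat by have := (Hkf i).1; lia.
apply: (Hkf i).2; apply: Hr => //; last exact: stage_descent.
by split; [exact: (iterate _).2.1 | exact: HK].
Qed.

End NonStopping.

Lemma stage_stops : vbounded D -> C1_with_gradient f f' -> 0 < beta < 1 -> 0 < delta ->
  exists k, mu D f' (x k) < delta.
Proof.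
move=> HDbd Hf Hbeta Hdelta; apply: NNPP => hno.
have Hnostop : forall k, delta <= mu D f' (x k).
  by move=> k; apply: Rnot_lt_le => h; apply: hno; exists k.
apply: (stage_armijo_not_often Hnostop HDbd Hf Hbeta Hdelta) => K.
apply: NNPP => hK; apply: (stage_armijo_not_eventually Hnostop HDbd Hf Hbeta Hdelta).
exists K => k hk; apply: NNPP => hk'; apply: hK; by exists k.
Qed.

End Stage.

(** * Limit points of the run *)

Lemma least_witness (P : nat -> Prop) : (exists k, P k) ->
  exists k, P k /\ forall j, (j < k)%nat -> ~ P j.
Proof.
move=> HP.
have [k [[Pk Hk] _]] := @dec_inh_nat_subset_has_unique_least_element P (fun k => classic (P k)) HP.
exists k; split => // j hj Pj; have := Hk j Pj; move/leP; lia.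
Qed.

Lemma run_iterates n (D : vec n -> Prop) f f' beta delta w0 w tau x z lam l :
  vconvex D -> vbounded D -> C1_with_gradient f f' -> D w0 -> 0 < beta < 1 ->
  (forall p, (1 <= p)%nat -> 0 < delta p) ->
  cgmis_run D f f' beta delta w0 w tau x z lam l ->
  forall p, D (w p) /\ ((1 <= p)%nat -> mu D f' (w p) < delta p).
Proof.
move=> HDcvx HDbd Hf Hw0 Hbeta Hdelta [Hw0e Hstages].
elim=> [|q [IH _]]; first by rewrite Hw0e.
have [Hst Hwp] := Hstages q.+1 (ltn0Sn q); rewrite subn1 /= in Hst.
have [k [Hk Hkmin]] := least_witness (stage_stops Hst HDcvx IH HDbd Hf Hbeta (Hdelta _ (ltn0Sn q))).
have Hk' : forall j, (j < k)%nat -> delta q.+1 <= mu D f' (x q.+1 j).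
  by move=> j hj; apply: Rnot_lt_le; apply: Hkmin.
rewrite (Hwp k Hk Hk'); split => //.
exact: (stage_iterates_inD Hst HDcvx IH Hk').1.
Qed.

Lemma limit_point_in_D0 n (D : vec n -> Prop) f' (delta : nat -> R) w xs :
  vnonempty D -> vclosed D -> vbounded D -> vcontinuous f' -> Un_cv delta 0 ->
  (forall p, D (w p)) -> (forall p, (1 <= p)%nat -> mu D f' (w p) < delta p) ->
  limit_point w xs -> in_D0 D f' xs.
Proof.
move=> HDne HDcl HDbd Hf' Hdelta HwD Hmu Hxs.
split => [|y hy]; first exact: limit_point_vclosed HDcl HwD Hxs.
have Hgap : rcontinuous (fun v => dot (f' v) (vsub v y)).
  exact: rcontinuous_dot Hf' (vcontinuous_subl y).
suff : dot (f' xs) (vsub xs y) <= 0 by rewrite !dot_subr; lra.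
apply: (limit_point_le Hgap Hdelta _ Hxs) => p hp.
exact: Rle_lt_trans ((mu_spec f' (w p) HDne HDcl HDbd).2 y hy) (Hmu p hp).
Qed.

Lemma in_D0_in_Dstar n (D : vec n -> Prop) f f' xs :
  pseudo_convex_on D f f' -> in_D0 D f' xs -> in_Dstar D f xs.
Proof. by move=> Hpc [hxs H0]; split => // y hy; exact: Hpc _ _ hxs hy (H0 y hy). Qed.

(* If [f (w p)] stayed [eps] away from [f^*] along a subsequence, a limit point
   of that subsequence would be a minimizer with [f] value away from [f^*]. *)
Lemma cv_fstar n (D : vec n -> Prop) f w : vbounded D -> rcontinuous f ->
  (forall p, D (w p)) -> (forall xs, limit_point w xs -> in_Dstar D f xs) ->
  Un_cv (fun p => f (w p)) (fstar D f).
Proof.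
move=> HDbd Hf HwD Hmin eps he; apply: NNPP => hno.
have Hbad : forall N, exists p, (N <= p)%nat /\ eps <= R_dist (f (w p)) (fstar D f).
  move=> N; apply: NNPP => h; apply: hno; exists N => p hp.
  by apply: Rnot_le_lt => h'; apply: h; exists p; split => //; exact/leP.
have [ps Hps] := choice_seq Hbad.
have [xs Hxs] := vbounded_limit_point HDbd (fun i => HwD (ps i)).
have Efs := fstar_minimizer (Hmin _ (limit_point_subseq (fun i => (Hps i).1) Hxs)).
have [d [hd Hd]] := Hf xs _ he; have [i [_ hi]] := Hxs d hd 0%nat.
by have := Hd _ hi; have := (Hps i).2; rewrite Efs /R_dist; lra.
Qed.

Theorem theorem5p1 (n : nat) (D : vec n -> Prop) (f : vec n -> R) (f' : vec n -> vec n)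
  (beta : R) (delta : nat -> R) (w0 : vec n)
  (HDne : vnonempty D) (HDcvx : vconvex D) (HDcl : vclosed D)
  (HDbd : vbounded D)
  (Hf : C1_with_gradient f f')
  (Hw0 : D w0) (Hbeta : 0 < beta < 1)
  (Hdelta : forall p, (1 <= p)%nat -> 0 < delta p) (Hdelta0 : Un_cv delta 0)
  (w : nat -> vec n) (tau : nat -> nat -> R) (x z : nat -> nat -> vec n)
  (lam : nat -> nat -> R) (l : nat -> nat -> nat)
  (Hrun : cgmis_run D f f' beta delta w0 w tau x z lam l) :
  (* (i) every stage p >= 1 stops after finitely many changes of k *)
  (forall p, (1 <= p)%nat -> exists k, mu D f' (x p k) < delta p) /\
  (* (ii) {w^p} has limit points, all in D^0 *)
  (exists xs, limit_point w xs) /\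
  (forall xs, limit_point w xs -> in_D0 D f' xs) /\
  (* (iii) under pseudo-convexity: limit points in D^*, f(w^p) -> f^* *)
  (pseudo_convex_on D f f' ->
     (forall xs, limit_point w xs -> in_Dstar D f xs) /\
     Un_cv (fun p => f (w p)) (fstar D f)).
Proof.
have Hw := run_iterates HDcvx HDbd Hf Hw0 Hbeta Hdelta Hrun.
have HwD p : D (w p) := (Hw p).1.
have HD0 xs : limit_point w xs -> in_D0 D f' xs.
  exact: limit_point_in_D0 HDne HDcl HDbd Hf.2 Hdelta0 HwD (fun p => (Hw p).2).
split.
  move=> p hp; have [Hst _] := Hrun.2 p hp.
  exact: stage_stops Hst HDcvx (HwD _) HDbd Hf Hbeta (Hdelta p hp).
split; first exact: vbounded_limit_point HDbd HwD.
split => // Hpc.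
have Hmin xs : limit_point w xs -> in_Dstar D f xs by move/HD0; exact: in_D0_in_Dstar.
split => //; exact: cv_fstar HDbd (gradient_rcontinuous Hf.1) HwD Hmin.
Qed.
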